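(* Let $\mathbb{X}$, $R$, $\ell$, $r_{\mathbb{X}}$ and $\mathfrak{J}_{R/\mathbb{F}_q[\ell]}$ be as in the context, and let $i\ge0$. Then the Hilbert function of the $i$-th doubling $D^{(i)}_{\mathbb{X}}=R/\ell^i\mathfrak{J}_{R/\mathbb{F}_q[\ell]}$ satisfies $\dim_{\mathbb{F}_q}(D^{(i)}_{\mathbb{X}})_j=\mathrm{HF}_{\mathbb{X}}(j)$ for $j<r_{\mathbb{X}}+i$ and $\dim_{\mathbb{F}_q}(D^{(i)}_{\mathbb{X}})_{r_{\mathbb{X}}+i+j}=\mathrm{HF}_{\mathbb{X}}(r_{\mathbb{X}}-1-j)$ for $j\ge0$. In particular, the largest degree $d$ with $(D^{(i)}_{\mathbb{X}})_d\ne0$ is $d=2r_{\mathbb{X}}+i-1$.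
   Context: Let $P=\mathbb{F}_q[x_1,\dots,x_k]$ (standard grading), $\mathbb{X}=\{p_1,\dots,p_n\}$ a set of $n$ distinct $\mathbb{F}_q$-rational points of $\mathbb{P}^{k-1}$, $I_{\mathbb{X}}$ its homogeneous vanishing ideal, $R=P/I_{\mathbb{X}}$, $\mathrm{HF}_{\mathbb{X}}(i)=\dim R_i$ for $i\ge0$ and $0$ for $i<0$, and $r_{\mathbb{X}}=\min\{i\ge0:\mathrm{HF}_{\mathbb{X}}(i)=n\}$. Standing assumption: $L\in P_1$ is a linear form with $L(p_j)\ne0$ for all $j$, and $\ell$ is its residue class in $R$. Each $p_j$ is represented by the coordinate vector $v_j$ with $L(v_j)=1$, and $f(p_j)=f(v_j)$ for homogeneous $f$. The separators are the unique $f_1,\dots,f_n\in R_{r_{\mathbb{X}}}$ with $f_i(p_j)=\delta_{ij}$. The canonical ideal is $\mathfrak{J}_{R/\mathbb{F}_q[\ell]}=\{\sum_{i=1}^n\varphi(f_i)f_i:\varphi\in\mathrm{Hom}_{\mathbb{F}_q[\ell]}(R,\mathbb{F}_q[\ell])\}\subseteq R$, a homogeneous ideal of $R$. *)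

From HB Require Import structures.
From mathcomp Require Import all_boot all_order all_algebra all_field.
From mathcomp Require Import mpoly.
From Stdlib Require Import ClassicalEpsilon.

Set Implicit Arguments.
Unset Strict Implicit.
Unset Printing Implicit Defensive.

Import Order.TTheory GRing.Theory.
Local Open Scope ring_scope.

(* Throughout: F = F_q (an arbitrary finite field), P = F[x_0,...,x_k]
   = {mpoly F[k.+1]} (so the paper's number of variables is k.+1),
   points of P^k are given by coordinate row vectors. *)

Section Doubling.
Variables (F : finFieldType) (k : nat).
Local Notation P := {mpoly F[k.+1]}.

Definition pbool (A : Prop) : bool :=
  if excluded_middle_informative A then true else false.

Definition ev (f : P) (v : 'rV[F]_k.+1) : F := f.@[fun j => v ord0 j].

(* dim_F of the degree-d part of P/K, where K is a (homogeneous) subset: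
   dim P_d - dim span (K ∩ P_d). *)
Definition hpart (K : P -> Prop) (d : nat) : {vspace dhomog k.+1 F d} :=
  <<[seq (x : dhomog k.+1 F d)
       | x <- enum (finvect_type (dhomog k.+1 F d))
       & pbool (K (mpoly_of_dhomog x))]>>%VS.

Definition qdim (K : P -> Prop) (d : nat) : nat :=
  (\dim (fullv : {vspace dhomog k.+1 F d}) - \dim (hpart K d))%N.

Variables (n : nat) (pts : 'I_n -> 'rV[F]_k.+1) (L : P).

(* homogeneous vanishing ideal I_X: all homogeneous components of f
   vanish at every point *)
Definition IX (f : P) : Prop :=
  forall (d : nat) (j : 'I_n), ev (pihomog mdeg d f) (pts j) = 0.

(* congruence modulo I_X, i.e. equality in R = P / I_X *)
Definition eqI (f g : P) : Prop := IX (f - g).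

(* Hilbert function of X, HF_X(j) = dim_F R_j, extended by 0 to negative j *)
Definition HF (j : nat) : nat := qdim IX j.
Definition HFz (z : int) : nat := if z is Posz m then HF m else 0%N.

Definition is_rX (r : nat) : Prop :=
  HF r = n /\ forall j, (j < r)%N -> HF j <> n.

(* the normalized representative v_j of p_j with L(v_j) = 1 *)
Definition nv (j : 'I_n) : 'rV[F]_k.+1 := (ev L (pts j))^-1 *: pts j.

(* (representatives in P of) the separators f_1..f_n in R_{r} *)
Definition is_separators (r : nat) (s : 'I_n -> P) : Prop :=
  forall i, s i \is r.-homog /\ forall j, ev (s i) (nv j) = (i == j)%:R.

(* (representatives of) elements of the subring F[l] of R *)
Definition inFl (f : P) : Prop :=
  exists c : {poly F}, eqI f (\sum_(m < size c) c`_m *: L ^+ m).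

(* (lifts P -> P of) F[l]-module homomorphisms R -> F[l] *)
Definition is_Fl_hom (phi : P -> P) : Prop :=
  [/\ forall f, IX f -> IX (phi f),
      forall f g, eqI (phi (f + g)) (phi f + phi g),
      forall c f, inFl c -> eqI (phi (c * f)) (c * phi f)
    & forall f, inFl (phi f)].

(* preimage in P of the canonical ideal J_{R/F[l]} *)
Definition canJ (r : nat) (g : P) : Prop :=
  exists phi : P -> P, exists s : 'I_n -> P,
    [/\ is_Fl_hom phi, is_separators r s &
        eqI g (\sum_(i < n) phi (s i) * s i)].

(* preimage in P of the ideal l^i J of R; D^(i) = R / l^i J = P / dblK r i *)
Definition dblK (r i : nat) (f : P) : Prop :=
  exists g, canJ r g /\ eqI f (L ^+ i * g).

Definition HFD (r i d : nat) : nat := qdim (dblK r i) d.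

End Doubling.

(* Evaluating the degree-d component of a polynomial at the normalised points
   v_j (L(v_j) = 1) identifies R_d with a subspace of F^n; this subspace is all
   of F^n once d >= r, and multiplication by l is the identity on these
   coordinates.  The heart of the proof is a duality criterion: a form f of
   degree d lies in l^i J exactly when its value vector is orthogonal, for the
   standard dot product of F^n, to the value vectors of all forms of degree
   T = 2r + i - 1 - d.  It is necessary because, for h of degree T < r, the
   form l^(r-T) h is the combination of the separators f_j with coefficients
   h(v_j); applying an F[l]-linear phi and looking in degree d - i - r (below
   r - T) gives a relation between the h(v_j) and the constant coefficients of
   the phi(f_j), and those coefficients are the values of f.  It is sufficient
   because dotting the homogeneous components with the value vector of f
   defines such a phi explicitly.  Hence (D^(i))_d is dual to R_T, which gives
   HF_X(d) for d < r + i (then R_T = F^n), HF_X(T) for r + i <= d < 2r + i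
   (then R_d = F^n) and 0 beyond. *)

From HB Require Import structures.
From mathcomp Require Import all_boot all_order all_algebra all_field.
From mathcomp Require Import mpoly.
From mathcomp Require Import zify.
From Stdlib Require Import ClassicalEpsilon.

Set Implicit Arguments.
Unset Strict Implicit.
Unset Printing Implicit Defensive.

Import GRing.Theory.
Local Open Scope ring_scope.

Lemma pihomogMl (R : nzRingType) (m : nat) (mf : measure m) (e d : nat)
    (q p : {mpoly R[m]}) : q \is e.-homog for mf ->
  pihomog mf d (q * p) = if (e <= d)%N then q * pihomog mf (d - e) p else 0.
Proof.
move=> hq.
have hp : (mmeasure mf p <= (mmeasure mf p + d).+1)%N by rewrite leqW ?leq_addr.
rewrite {1}(pihomog_partitionE hp) mulr_sumr linear_sum /=.
have piM b : pihomog mf d (q * pihomog mf b p) =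
    if (e + b == d)%N then q * pihomog mf b p else 0.
  have hqp : q * pihomog mf b p \is (e + b).-homog for mf.
    exact/dhomogM/pihomogP.
  case: eqP => [<-|/eqP ne]; first by rewrite pihomog_dE.
  exact: pihomog_ne0 ne hqp.
under eq_bigr do rewrite piM.
case: leqP => hed; last first.
  by rewrite big1 // => b _; case: eqP => // hb; lia.
have hlt : (d - e < (mmeasure mf p + d).+1)%N by rewrite ltnS (leq_trans (leq_subr _ _)) ?leq_addl.
rewrite -big_mkcond (big_pred1 (Ordinal hlt)) // => b /=.
apply/eqP/eqP => [hb|->]; last by rewrite /= subnKC.
by apply: val_inj => /=; lia.
Qed.

Lemma sum_nat_widen0 (V : nmodType) (f : nat -> V) a b : (a <= b)%N ->
  (forall m, (a <= m)%N -> f m = 0) -> \sum_(0 <= m < b) f m = \sum_(0 <= m < a) f m.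
Proof.
move=> hab hf; rewrite [RHS](big_nat_widen _ _ _ _ _ hab) big_mkcondr /=.
by apply: eq_bigr => m _; case: ltnP => // /hf.
Qed.

(** * Values at the normalised points *)

Section Doubling.
Variables (F : finFieldType) (k n : nat).
Local Notation P := {mpoly F[k.+1]}.
Variables (pts : 'I_n -> 'rV[F]_k.+1) (L : P).
Hypotheses (L_lin : L \is 1.-homog) (L_nz : forall j, ev L (pts j) != 0).

Local Notation nv := (nv pts L).
Local Notation IX := (IX pts).
Local Notation eqI := (eqI pts).
Local Notation inFl := (inFl pts L).

Lemma ev_homogZ d (h : P) c v : h \is d.-homog -> ev h (c *: v) = c ^+ d * ev h v.
Proof.
move=> /dhomogP hh; rewrite /ev !mevalE mulr_sumr; apply: eq_big_seq => m hm.
rewrite mulrCA; congr (_ * _).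
under eq_bigr do rewrite mxE exprMn.
by rewrite big_split /= prodrXr -mdegE hh.
Qed.

Lemma ev_homog_nv d (h : P) j : h \is d.-homog ->
  ev h (nv j) = (ev L (pts j))^-1 ^+ d * ev h (pts j).
Proof. exact: ev_homogZ. Qed.

Lemma ev_expL_nv t j : ev (L ^+ t) (nv j) = 1.
Proof.
have -> : ev (L ^+ t) (nv j) = ev L (nv j) ^+ t by rewrite /ev rmorphXn.
by rewrite (ev_homog_nv _ L_lin) expr1 mulVf ?expr1n.
Qed.

Lemma expL_homog t : L ^+ t \is t.-homog.
Proof. by have := dhomogMn t L_lin; rewrite mul1n. Qed.

Definition Ev (d : nat) (p : P) : 'rV[F]_n := \row_j ev (pihomog mdeg d p) (nv j).

Lemma Ev_is_linear d : linear (Ev d).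
Proof. by move=> c p q; apply/rowP => j; rewrite !mxE linearP /ev mevalD mevalZ. Qed.
HB.instance Definition _ d :=
  GRing.isLinear.Build F P 'rV[F]_n _ (Ev d) (Ev_is_linear d).

Lemma Ev_homog d m (h : P) : h \is d.-homog ->
  Ev m h = if m == d then \row_j ev h (nv j) else 0.
Proof.
move=> hh; case: eqP => [->|/eqP ne]; apply/rowP => j; rewrite !mxE.
  by rewrite pihomog_dE.
by rewrite (pihomog_ne0 _ hh) 1?eq_sym // /ev meval0.
Qed.

Lemma Ev_homogMl e m (q p : P) : q \is e.-homog ->
  Ev m (q * p) = if (e <= m)%N then \row_j (ev q (nv j) * Ev (m - e) p 0 j) else 0.
Proof.
move=> hq; apply/rowP => j; rewrite /Ev (pihomogMl _ _ hq).
by case: leqP => _; rewrite !mxE /ev ?mevalM ?meval0.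
Qed.

Lemma Ev_expLMl t m (p : P) : Ev m (L ^+ t * p) = if (t <= m)%N then Ev (m - t) p else 0.
Proof.
rewrite (Ev_homogMl _ _ (expL_homog t)); case: leqP => // _.
by apply/rowP => j; rewrite !mxE ev_expL_nv mul1r.
Qed.

Lemma Ev_msize m (p : P) : (msize p <= m)%N -> Ev m p = 0.
Proof.
move=> hm; apply/rowP => j; rewrite !mxE pihomogE big_seq_cond big1 ?/ev ?meval0 //.
by move=> m' /andP[/msize_mdeg_lt hlt /eqP he]; move: (leq_trans hlt hm); rewrite he ltnn.
Qed.

Lemma Ev_pihomog d (p : P) : Ev d (pihomog mdeg d p) = Ev d p.
Proof. by apply/rowP => j; rewrite !mxE pihomog_id. Qed.

Lemma IX_Ev (p : P) : IX p <-> forall d, Ev d p = 0.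
Proof.
split=> [h d|h d j].
  by apply/rowP => j; rewrite !mxE (ev_homog_nv j (pihomogP mdeg d p)) h mulr0.
have /rowP/(_ j)/eqP := h d; rewrite !mxE (ev_homog_nv j (pihomogP mdeg d p)).
by rewrite mulf_eq0 expf_eq0 invr_eq0 (negbTE (L_nz j)) andbF => /eqP.
Qed.

Lemma IX_homog d (h : P) : h \is d.-homog -> IX h <-> Ev d h = 0.
Proof.
move=> hh; rewrite IX_Ev; split => [->|h0 m] //.
by rewrite (Ev_homog m hh); case: eqP => // _; rewrite -h0 (Ev_homog d hh) eqxx.
Qed.

Lemma eqI_Ev (p q : P) : eqI p q <-> forall d, Ev d p = Ev d q.
Proof.
rewrite /eqI IX_Ev; split=> h d; last by rewrite linearB /= h subrr.
by apply/eqP; rewrite -subr_eq0 -linearB /=; apply/eqP.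
Qed.

Lemma eqI_refl x : eqI x x.
Proof. exact/eqI_Ev. Qed.

Lemma eqI_sym x y : eqI x y -> eqI y x.
Proof. by move=> /eqI_Ev hxy; apply/eqI_Ev. Qed.

Lemma IX_mulr (x p : P) : IX x -> IX (x * p).
Proof.
move=> /IX_Ev hx; apply/IX_Ev => m.
rewrite (pihomog_partitionE (leqnn (msize x))) mulr_suml linear_sum big1 //= => d _.
rewrite (Ev_homogMl _ _ (pihomogP _ _ _)); case: leqP => // _.
apply/rowP => j; have /rowP/(_ j) := hx d.
by rewrite !mxE => ->; rewrite mul0r.
Qed.

Lemma eqI_mulr x y p : eqI x y -> eqI (x * p) (y * p).
Proof. by rewrite /eqI -mulrBl; apply: IX_mulr. Qed.

(** * The subring F[l] and F[l]-linear maps to it *)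

Definition polyL (c : {poly F}) : P := \sum_(m < size c) c`_m *: L ^+ m.

Lemma Ev_polyL d (c : {poly F}) : Ev d (polyL c) = const_mx c`_d.
Proof.
apply/rowP => j; rewrite linear_sum summxE mxE -[c in RHS]coefK poly_def coef_sum.
apply: eq_bigr => m _; rewrite linearZ /= (Ev_homog _ (expL_homog m)) coefZ coefXn.
by case: eqP => _; rewrite !mxE ?ev_expL_nv ?mulr1 ?mulr0.
Qed.

Lemma inFl_Ev u : inFl u <-> exists c : {poly F}, forall d, Ev d u = const_mx c`_d.
Proof.
split=> [[c /eqI_Ev hc]|[c hc]]; exists c; first by move=> d; rewrite hc Ev_polyL.
by apply/eqI_Ev => d; rewrite hc Ev_polyL.
Qed.

Lemma inFl_Ev_const u m j j' : inFl u -> Ev m u 0 j = Ev m u 0 j'.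
Proof. by case/inFl_Ev => c hc; rewrite hc !mxE. Qed.

Lemma inFl_sum_expL (I : Type) (s : seq I) (a : I -> F) (t : I -> nat) :
  inFl (\sum_(x <- s) a x *: L ^+ t x).
Proof.
apply/inFl_Ev; exists (\sum_(x <- s) a x *: 'X^(t x)) => d.
apply/rowP => j; rewrite linear_sum summxE mxE coef_sumMXn big_mkcondr.
apply: eq_bigr => x _; rewrite linearZ /= (Ev_homog _ (expL_homog _)) eq_sym.
by case: eqP => _; rewrite !mxE ?ev_expL_nv ?mulr1 ?mulr0.
Qed.

Lemma inFl_expL t : inFl (L ^+ t).
Proof. by have := inFl_sum_expL [:: t] (fun _ => 1) id; rewrite big_seq1 scale1r. Qed.

Lemma inFl_C a : inFl a%:A.
Proof. by have := inFl_sum_expL [:: 0%N] (fun _ => a) id; rewrite big_seq1 expr0. Qed.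

Section FlHom.
Variable phi : P -> P.
Hypothesis phi_hom : is_Fl_hom pts L phi.

Lemma Ev_hom_IX d x : IX x -> Ev d (phi x) = 0.
Proof. by case: phi_hom => phi_IX _ _ _ /phi_IX/IX_Ev. Qed.

Lemma Ev_homD d x y : Ev d (phi (x + y)) = Ev d (phi x) + Ev d (phi y).
Proof. by case: phi_hom => _ phiD _ _; have /eqI_Ev -> := phiD x y; rewrite linearD. Qed.

Lemma Ev_hom_eqI d x y : eqI x y -> Ev d (phi x) = Ev d (phi y).
Proof. by move=> hxy; rewrite -[x](subrK y) Ev_homD Ev_hom_IX ?add0r. Qed.

Lemma Ev_homMl d u x : inFl u -> Ev d (phi (u * x)) = Ev d (u * phi x).
Proof. by case: phi_hom => _ _ phiM _ /(phiM _ x)/eqI_Ev. Qed.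

Lemma Ev_hom_lincomb (I : finType) d (a : I -> F) (x : I -> P) :
  Ev d (phi (\sum_i a i *: x i)) = \sum_i a i *: Ev d (phi (x i)).
Proof.
elim/big_rec2: _ => [|i y z _ IH]; first by apply: Ev_hom_IX; apply/IX_Ev => m; rewrite linear0.
rewrite Ev_homD IH -mul_mpolyC -alg_mpolyC Ev_homMl; last exact: inFl_C.
by rewrite -scalerAl mul1r linearZ.
Qed.

End FlHom.

Definition dot (x y : 'rV[F]_n) : F := \sum_j x 0 j * y 0 j.

Lemma dotC x y : dot x y = dot y x.
Proof. by apply: eq_bigr => j _; rewrite mulrC. Qed.

Lemma dot_is_linear x : linear_for *%R (dot x).
Proof.
move=> a y z; rewrite /dot mulr_sumr -big_split; apply: eq_bigr => j _.
by rewrite !mxE mulrDr mulrCA.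
Qed.
HB.instance Definition _ x :=
  GRing.isLinear.Build F 'rV[F]_n F *%R (dot x) (dot_is_linear x).

Lemma dot0l y : dot 0 y = 0.
Proof. by rewrite dotC linear0. Qed.

Lemma dot_delta x j : dot x (delta_mx 0 j) = x 0 j.
Proof.
rewrite /dot (bigD1 j) //= big1 => [|a ne]; rewrite mxE ?eqxx ?mulr1 ?addr0 //.
by case: eqP ne => [->|_]; rewrite ?eqxx // mulr0.
Qed.

Section PairingHom.
Variables (c : 'rV[F]_n) (a b : nat).

Definition pairing_hom (p : P) : P :=
  \sum_(0 <= m < msize p) dot c (Ev m p) *: L ^+ (m + a - b).

Lemma pairing_homE B p : (forall m, (B <= m)%N -> Ev m p = 0) ->
  pairing_hom p = \sum_(0 <= m < B) dot c (Ev m p) *: L ^+ (m + a - b).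
Proof.
move=> hB; rewrite /pairing_hom.
rewrite -(sum_nat_widen0 (leq_maxr B (msize p))) => [|m hm]; last first.
  by rewrite Ev_msize ?linear0 ?scale0r // (leq_trans (leq_maxr _ _) hm).
rewrite -(sum_nat_widen0 (leq_maxl B (msize p))) // => m hm.
by rewrite hB ?linear0 ?scale0r.
Qed.

Lemma pairing_hom_is_linear : linear pairing_hom.
Proof.
move=> z x y; set B := (msize x + msize y + msize (z *: x + y))%N.
have hB p : (msize p <= B)%N -> forall m, (B <= m)%N -> Ev m p = 0.
  by move=> hp m hm; apply: Ev_msize; apply: leq_trans hm.
have [hx hy hxy] : [/\ msize x <= B, msize y <= B & msize (z *: x + y) <= B]%N.
  by rewrite /B; split; lia.
rewrite (pairing_homE (hB _ hxy)) (pairing_homE (hB _ hx)) (pairing_homE (hB _ hy)).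
rewrite scaler_sumr -big_split; apply: eq_bigr => m _.
by rewrite linearP linearP /= scalerDl scalerA.
Qed.
HB.instance Definition _ :=
  GRing.isLinear.Build F P P _ pairing_hom pairing_hom_is_linear.

Lemma pairing_hom_IX p : IX p -> pairing_hom p = 0.
Proof. by move/IX_Ev => hp; rewrite /pairing_hom big1 // => m _; rewrite hp linear0 scale0r. Qed.

Lemma pairing_hom_inFl p : inFl (pairing_hom p).
Proof. exact: inFl_sum_expL. Qed.

(* The exponent [m + a - b] is truncated; [c_perp] makes the affected terms vanish. *)
Hypothesis c_perp : forall m x, (m + a < b)%N -> dot c (Ev m x) = 0.

Lemma pairing_hom_expLMl t p : pairing_hom (L ^+ t * p) = L ^+ t * pairing_hom p.
Proof.
rewrite (pairing_homE (B := t + msize p)) => [|m hm]; last first.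
  by rewrite Ev_expLMl; case: leqP => // _; apply: Ev_msize; lia.
rewrite (big_cat_nat (n := t)) ?leq_addr //= big_nat_cond big1 ?add0r; last first.
  by move=> m /andP[/andP[_ hm] _]; rewrite Ev_expLMl leqNgt hm /= linear0 scale0r.
rewrite -{1}(add0n t) big_addn addKn /pairing_hom mulr_sumr; apply: eq_bigr => m _.
rewrite Ev_expLMl leq_addl addnK; case: (ltnP (m + a) b) => hmb.
  by rewrite c_perp // !scale0r mulr0.
by rewrite -scalerAr -exprD; congr (_ *: L ^+ _); lia.
Qed.

Lemma pairing_hom_Fl_hom : is_Fl_hom pts L pairing_hom.
Proof.
split=> [f /pairing_hom_IX ->|f g|u f [cu hu]|f]; last exact: pairing_hom_inFl.
- by apply/IX_Ev => m; rewrite linear0.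
- by rewrite linearD; exact: eqI_refl.
have -> : pairing_hom (u * f) = polyL cu * pairing_hom f.
  rewrite -[u](subrK (polyL cu)) mulrDl linearD /= pairing_hom_IX ?add0r; last exact: IX_mulr.
  rewrite /polyL !mulr_suml linear_sum; apply: eq_bigr => m _.
  by rewrite -!scalerAl linearZ /= pairing_hom_expLMl.
exact/eqI_sym/eqI_mulr.
Qed.

End PairingHom.


Section Separators.
Variables (r : nat) (s : 'I_n -> P).
Hypothesis s_sep : is_separators pts L r s.

Lemma sep_homog a : s a \is r.-homog.
Proof. exact: (s_sep a).1. Qed.

Lemma Ev_sep a : Ev r (s a) = delta_mx 0 a.
Proof.
apply/rowP => j; rewrite (Ev_homog r (sep_homog a)) eqxx !mxE (s_sep a).2.
by rewrite eq_sym.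
Qed.

Lemma Ev_sum_mul_sep (x : 'I_n -> P) e :
  Ev e (\sum_a x a * s a) = if (r <= e)%N then \row_j Ev (e - r) (x j) 0 j else 0.
Proof.
rewrite linear_sum; under eq_bigr do rewrite /= mulrC (Ev_homogMl _ _ (sep_homog _)).
case: leqP => _; last by rewrite big1.
apply/rowP => j; rewrite summxE mxE (bigD1 j) //= mxE (s_sep j).2 eqxx mul1r.
rewrite big1 ?addr0 // => a; rewrite mxE (s_sep a).2.
by case: eqP => // _; rewrite mul0r.
Qed.

Definition sep_comb d (y : 'rV[F]_n) : P := \sum_a y 0 a *: (L ^+ (d - r) * s a).

Lemma sep_comb_homog d y : (r <= d)%N -> sep_comb d y \is d.-homog.
Proof.
move=> hrd; apply: rpred_sum => a _; apply: rpredZ.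
by have := dhomogM (expL_homog (d - r)) (sep_homog a); rewrite subnK.
Qed.

Lemma Ev_sep_comb d y : (r <= d)%N -> Ev d (sep_comb d y) = y.
Proof.
move=> hrd; rewrite [RHS]row_sum_delta linear_sum; apply: eq_bigr => a _.
by rewrite linearZ /= (Ev_expLMl (d - r) d (s a)) leq_subr subKn // Ev_sep.
Qed.

Lemma sep_interp d h : (r <= d)%N -> h \is d.-homog -> eqI h (sep_comb d (Ev d h)).
Proof.
move=> hrd hh; rewrite /eqI (IX_homog (rpredB hh (sep_comb_homog _ hrd))).
by rewrite linearB /= Ev_sep_comb // subrr.
Qed.

Lemma Ev_hom_sep phi T m h : is_Fl_hom pts L phi -> h \is T.-homog ->
    (T <= r)%N -> (m < r - T)%N ->
  \sum_a Ev T h 0 a *: Ev m (phi (s a)) = 0.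
Proof.
move=> phi_hom hh hTr hm.
have hLh : L ^+ (r - T) * h \is r.-homog.
  by have := dhomogM (expL_homog (r - T)) hh; rewrite subnK.
have := Ev_hom_eqI phi_hom m (sep_interp (leqnn r) hLh).
rewrite (Ev_homMl phi_hom _ _ (inFl_expL _)) Ev_expLMl leqNgt hm /= (Ev_hom_lincomb phi_hom).
rewrite Ev_expLMl leq_subr subKn // => E; rewrite [RHS]E; apply: eq_bigr => a _.
by rewrite subnn expr0 mul1r.
Qed.

Lemma pairing_hom_sep c a b j : pairing_hom c a b (s j) = c 0 j *: L ^+ (r + a - b).
Proof.
rewrite (@pairing_homE c a b r.+1) => [|m hm]; last first.
  by rewrite (Ev_homog m (sep_homog j)) gtn_eqF.
rewrite big_nat_recr //= big_nat_cond big1 ?add0r => [|m /andP[/andP[_ hm] _]].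
  by rewrite Ev_sep dot_delta.
by rewrite (Ev_homog m (sep_homog j)) ltn_eqF // linear0 scale0r.
Qed.

End Separators.

(** * The duality criterion *)

Section Duality.
Variables (r i : nat).

Definition dual_orth d (c : 'rV[F]_n) : Prop := forall T h,
  (T + d).+1 = (2 * r + i)%N -> h \is T.-homog -> dot c (Ev T h) = 0.

Lemma dblK_dual_orth d f : (0 < n)%N -> dblK pts L r i f -> dual_orth d (Ev d f).
Proof.
move=> n_gt0 [g [[phi [s [phi_hom s_sep hg]]] hfg]] T h hT hh.
have /eqI_Ev -> := hfg; rewrite Ev_expLMl; case: leqP => hid; last exact: dot0l.
have /eqI_Ev -> := hg; rewrite (Ev_sum_mul_sep s_sep); case: leqP => hre; last exact: dot0l.
have hTr : (T <= r)%N by lia.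
have hm : (d - i - r < r - T)%N by lia.
have /rowP/(_ (Ordinal n_gt0)) := Ev_hom_sep s_sep phi_hom hh hTr hm.
rewrite summxE mxE => E; rewrite [RHS](esym E) /dot; apply: eq_bigr => j _.
have [_ _ _ phi_inFl] := phi_hom.
by rewrite mxE mulrC [RHS]mxE (inFl_Ev_const _ j (Ordinal n_gt0) (phi_inFl (s j))).
Qed.

Lemma dual_orth_dblK s d f : is_separators pts L r s -> f \is d.-homog ->
  (r + i <= d)%N -> dual_orth d (Ev d f) -> dblK pts L r i f.
Proof.
move=> s_sep hf hd orth; set c := Ev d f.
have c_perp m x : (m + (d - i) < 2 * r)%N -> dot c (Ev m x) = 0.
  move=> hm; set T := (2 * r + i - d.+1)%N.
  have -> : Ev m x = Ev T (pihomog mdeg T (L ^+ (T - m) * x)).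
    by rewrite Ev_pihomog Ev_expLMl leq_subr subKn //; lia.
  by apply: orth (pihomogP _ _ _); lia.
exists (\sum_a pairing_hom c (d - i) (2 * r) (s a) * s a); split.
  exists (pairing_hom c (d - i) (2 * r)), s; split => //; last exact: eqI_refl.
  exact: pairing_hom_Fl_hom.
apply/eqI_Ev => m; have /eqI_Ev -> := sep_interp s_sep (leq_trans (leq_addr i r) hd) hf.
congr Ev; rewrite /sep_comb mulr_sumr; apply: eq_bigr => a _.
rewrite (pairing_hom_sep s_sep) -scalerAl -scalerAr mulrA -exprD.
by congr (_ *: (L ^+ _ * _)); lia.
Qed.

Lemma dual_orth_low s d c : is_separators pts L r s -> (d < r + i)%N ->
  dual_orth d c <-> c = 0.
Proof.
move=> s_sep hd; split=> [orth | -> T h _ _]; last exact: dot0l.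
apply/rowP => j; set T := (2 * r + i - d.+1)%N.
have hrT : (r <= T)%N by lia.
have hT : (T + d).+1 = (2 * r + i)%N by lia.
have := orth T _ hT (sep_comb_homog s_sep (delta_mx 0 j) hrT).
by rewrite Ev_sep_comb // dot_delta mxE.
Qed.

Lemma dblK_IX s f : is_separators pts L r s -> IX f -> dblK pts L r i f.
Proof.
(* The zero map is the pairing homomorphism of [c = 0]. *)
move=> s_sep hf; exists (\sum_a pairing_hom 0 0 0 (s a) * s a); split.
  exists (pairing_hom 0 0 0), s; split => //; last exact: eqI_refl.
  by apply: pairing_hom_Fl_hom => m x; rewrite ltn0.
rewrite big1 => [|a _]; last by rewrite (pairing_hom_sep s_sep) mxE scale0r mul0r.
by rewrite mulr0 /eqI subr0.
Qed.

Lemma dblK_homogE s d f : (0 < n)%N -> is_separators pts L r s -> f \is d.-homog ->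
  dblK pts L r i f <-> dual_orth d (Ev d f).
Proof.
move=> n_gt0 s_sep hf; split; first exact: dblK_dual_orth.
case: (ltnP d (r + i)) => hd; last exact: dual_orth_dblK.
by move/(dual_orth_low _ s_sep hd)/(IX_homog hf); apply: dblK_IX.
Qed.

Lemma dblK_low s d f : (0 < n)%N -> is_separators pts L r s -> f \is d.-homog ->
  (d < r + i)%N -> dblK pts L r i f <-> IX f.
Proof.
move=> n_gt0 s_sep hf hd.
by rewrite (dblK_homogE n_gt0 s_sep hf) (dual_orth_low _ s_sep hd) (IX_homog hf).
Qed.

End Duality.

(** * Hilbert functions *)

Local Notation DH d := (dhomog k.+1 F d).

Definition Evf d : 'Hom(DH d, 'rV[F]_n) := linfun (Ev d \o @mpoly_of_dhomog k.+1 F d).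

Lemma pboolP (A : Prop) : reflect A (pbool A).
Proof. by rewrite /pbool; case: excluded_middle_informative => h; constructor. Qed.

Lemma hpart_eq (K : P -> Prop) d (U : {vspace DH d}) :
  (forall x : DH d, K x <-> x \in U) -> hpart K d = U.
Proof.
move=> hU; apply/vspaceP => x; apply/idP/idP => [|xU].
  apply/subvP: x; apply/span_subvP => x /mapP[y].
  by rewrite mem_filter => /andP[/pboolP/hU yU _] ->.
apply: memv_span; apply/mapP; exists x => //.
rewrite mem_filter; apply/andP; split; first exact/pboolP/hU.
by have := mem_enum (finvect_type (DH d)) x; rewrite inE.
Qed.

Lemma qdim_lker (K : P -> Prop) d (vT : vectType F) (f : 'Hom(DH d, vT)) :
  (forall x : DH d, K x <-> f x = 0) -> qdim K d = \dim (limg f).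
Proof.
move=> hK; rewrite /qdim (@hpart_eq _ _ (lker f)) => [|x]; last first.
  by rewrite memv_ker hK; split=> /eqP.
by rewrite -(limg_ker_dim f fullv) capfv addKn.
Qed.

Lemma HF_dim d : HF pts d = \dim (limg (Evf d)).
Proof. by apply: qdim_lker => x; rewrite lfunE; apply: IX_homog (dhomog_is_dhomog x). Qed.

Lemma limg_Evf_full r s d : is_separators pts L r s -> (r <= d)%N -> limg (Evf d) = fullv.
Proof.
move=> s_sep hrd; apply/vspaceP => y; rewrite memvf; apply/memv_imgP.
exists (DHomog (sep_comb_homog s_sep y hrd)); first exact: memvf.
by rewrite lfunE /= Ev_sep_comb.
Qed.

Lemma dim_rV m : \dim (fullv : {vspace 'rV[F]_m}) = m.
Proof. by rewrite dimvf /dim /= mul1n. Qed.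

Lemma separators_exist r : HF pts r = n -> exists s, is_separators pts L r s.
Proof.
rewrite HF_dim => hr.
have full : limg (Evf r) = fullv by apply/eqP; rewrite eqEdim subvf /= dim_rV hr.
have /fin_all_exists[u hu] : forall j, exists u : DH r, Evf r u = delta_mx 0 j.
  move=> j; have : delta_mx 0 j \in limg (Evf r) by rewrite full memvf.
  by case/memv_imgP => u _ ->; exists u.
exists (fun j => mpoly_of_dhomog (u j)) => a; split=> [|j]; first exact: dhomog_is_dhomog.
have /rowP/(_ j) := hu a; rewrite lfunE /= (Ev_homog r (dhomog_is_dhomog _)) eqxx !mxE.
by rewrite eq_sym.
Qed.

Lemma HF_neq0 d : (0 < n)%N -> HF pts d <> 0%N.
Proof.
move=> n_gt0; rewrite HF_dim => /eqP; rewrite dimv_eq0 => /eqP img0.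
have := memv_img (Evf d) (memvf (DHomog (expL_homog d))).
rewrite img0 memv0 lfunE /= (Ev_homog d (expL_homog d)) eqxx => /eqP/rowP/(_ (Ordinal n_gt0)).
by rewrite !mxE ev_expL_nv => /eqP; rewrite oner_eq0.
Qed.

Definition orth_map (W : {vspace 'rV[F]_n}) (y : 'rV[F]_n) : 'rV[F]_(\dim W) :=
  \row_b dot (vbasis W)`_b y.

Lemma orth_map_is_linear W : linear (orth_map W).
Proof. by move=> a y z; apply/rowP => b; rewrite !mxE linearP. Qed.
HB.instance Definition _ W :=
  GRing.isLinear.Build F 'rV[F]_n 'rV[F]_(\dim W) _ (orth_map W) (orth_map_is_linear W).

Lemma orth_map_eq0 W y : orth_map W y = 0 <-> (forall w, w \in W -> dot y w = 0).
Proof.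
split=> [/rowP hy w /coord_vbasis -> | hy]; last first.
  by apply/rowP => b; rewrite !mxE dotC hy // vbasis_mem ?mem_nth ?size_tuple.
rewrite linear_sum big1 // => b _; rewrite linearZ /= dotC.
by have := hy b; rewrite !mxE => ->; rewrite mulr0.
Qed.

Lemma limg_orth_map W : limg (linfun (orth_map W)) = fullv.
Proof.
apply/vspaceP => z; rewrite memvf [z]row_sum_delta.
apply: memv_suml => b _; apply: memvZ; set w := vbasis W.
have -> : delta_mx 0 b = orth_map W (\row_j coord w b (delta_mx 0 j)).
  apply/rowP => b'; rewrite !mxE /=.
  transitivity (coord w b (\sum_j w`_b' 0 j *: delta_mx 0 j)); last first.
    by rewrite linear_sum; apply: eq_bigr => j _; rewrite linearZ mxE.
  rewrite -row_sum_delta coord_free 1?eq_sym //.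
  exact: basis_free (vbasisP W).
by rewrite -lfunE; apply: memv_img; exact: memvf.
Qed.

Lemma HFD_low r i s d : (0 < n)%N -> is_separators pts L r s -> (d < r + i)%N ->
  HFD pts L r i d = HF pts d.
Proof.
move=> n_gt0 s_sep hd; rewrite HF_dim; apply: qdim_lker => x; rewrite lfunE /=.
by rewrite (dblK_low n_gt0 s_sep (dhomog_is_dhomog x) hd) (IX_homog (dhomog_is_dhomog x)).
Qed.

Lemma HFD_high r i s d : is_separators pts L r s -> (2 * r + i <= d)%N ->
  HFD pts L r i d = 0%N.
Proof.
move=> s_sep hd; rewrite /HFD /qdim (@hpart_eq _ _ fullv) ?subnn // => x.
rewrite memvf; split=> // _; apply: (dual_orth_dblK s_sep (dhomog_is_dhomog x)) => [|T h hT].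
all: lia.
Qed.

Lemma HFD_mid r i s d : (0 < n)%N -> is_separators pts L r s ->
  (r + i <= d < 2 * r + i)%N -> HFD pts L r i d = HF pts (2 * r + i - d.+1).
Proof.
move=> n_gt0 s_sep /andP[hd1 hd2]; set T := (2 * r + i - d.+1)%N.
have hT : (T + d).+1 = (2 * r + i)%N by lia.
set W := limg (Evf T).
rewrite /HFD (@qdim_lker _ _ _ (linfun (orth_map W) \o Evf d)%VF); last first.
  move=> x; rewrite comp_lfunE !lfunE /= orth_map_eq0.
  rewrite (dblK_homogE i n_gt0 s_sep (dhomog_is_dhomog x)).
  split=> [orth _ /memv_imgP[h _ ->] | orth T' h hT' hh].
    by rewrite lfunE /=; apply: orth (dhomog_is_dhomog h).
  move: hh; have -> : T' = T by lia.
  move=> hh; apply: orth; have -> : Ev T h = Evf T (DHomog hh) by rewrite lfunE.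
  exact: memv_img (memvf _).
rewrite limg_comp (limg_Evf_full s_sep) ?limg_orth_map ?dim_rV -?HF_dim //.
exact: leq_trans (leq_addr i r) hd1.
Qed.

End Doubling.

Theorem proposition6p2 (F : finFieldType) (k n : nat)
    (pts : 'I_n -> 'rV[F]_k.+1) (L : {mpoly F[k.+1]})
    (n_gt0 : (0 < n)%N)
    (pts_nz : forall j, pts j != 0)
    (pts_distinct : forall a b (c : F), a != b -> pts a != c *: pts b)
    (L_lin : L \is 1.-homog)
    (L_nz : forall j, ev L (pts j) != 0)
    (r : nat) (hr : is_rX pts r) (i : nat) :
  [/\ forall j, (j < r + i)%N -> HFD pts L r i j = HF pts j,
      forall j, HFD pts L r i (r + i + j) = HFz pts (r%:Z - 1 - j%:Z),
      forall d, (2 * r + i <= d)%N -> HFD pts L r i d = 0%N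
    & forall d, d.+1 = (2 * r + i)%N -> HFD pts L r i d <> 0%N].
Proof.
have [s s_sep] := separators_exist L_nz hr.1.
have HFD_top j : HFD pts L r i (r + i + j) = HFz pts (r%:Z - 1 - j%:Z).
  case: (ltnP j r) => hj.
    rewrite (HFD_mid L_lin L_nz n_gt0 s_sep); last by apply/andP; lia.
    by have -> : r%:Z - 1 - j%:Z = (2 * r + i - (r + i + j).+1)%N by lia.
  rewrite (HFD_high L_lin L_nz s_sep); last by lia.
  by have -> : r%:Z - 1 - j%:Z = Negz (j - r) by rewrite NegzE; lia.
split=> // [j hj|d hd|d hd].
- by have := HFD_low L_lin L_nz n_gt0 s_sep hj.
- by have := HFD_high L_lin L_nz s_sep hd.
case: (posnP r) => [r0|r_gt0].
  by rewrite (HFD_low L_lin L_nz n_gt0 s_sep); [exact: HF_neq0 L_lin L_nz _ n_gt0 | lia].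
have -> : d = (r + i + (r - 1))%N by lia.
by rewrite HFD_top (_ : _ - _ = 0); [exact: HF_neq0 L_lin L_nz _ n_gt0 | lia].
Qed.
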